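(* Suppose $\frac{\partial F_2}{\partial S}(S,I_2)\le I_2$ for all $S,I_2\ge0$. Then the model admits a unique single-strain ($I_2$)-infection equilibrium $E_2=(\tilde S,\tilde V_1,0,\tilde I_2)$ with $\tilde S,\tilde V_1,\tilde I_2>0$ if and only if $\mathcal{R}_2>1$.
   Context: The model is $\dot S=\Lambda-F_1(S,I_1)-F_2(S,I_2)-\lambda S$, $\dot V_1=rS-(\mu+kI_2)V_1$, $\dot I_1=F_1(S,I_1)-\alpha_1I_1$, $\dot I_2=F_2(S,I_2)+kI_2V_1-\alpha_2I_2$ on $\mathbb{R}^4_+$. The constants $\Lambda,\mu,r,k,\gamma_1,\gamma_2>0$ and $v_1,v_2\ge0$; $\lambda=r+\mu$ and $\alpha_i=\gamma_i+v_i+\mu$. For $i=1,2$ the incidence functions satisfy: - (H1) $F_i(S,I_i)=I_if_i(S,I_i)$ with $F_i,f_i\in C^2(\mathbb{R}^2_+,\mathbb{R}_+)$ and $F_i(0,I_i)=F_i(S,0)=0$; - (H2) $\partial f_i/\partial S>0$ and $\partial f_i/\partial I_i\le0$; - (H3) $\lim_{I_i\to0^+}F_i(S,I_i)/I_i$ exists and is positive for $S>0$. Let $S^0=\Lambda/\lambda$ and $\sigma_2=\frac{\partial F_2}{\partial I_2}(S^0,0)$. Set $\mathcal{R}_2=\sigma_2/\alpha_2+\frac{kr\Lambda}{\alpha_2\mu\lambda}$. *)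

From Stdlib Require Import Reals.
From Coquelicot Require Import Coquelicot.
Open Scope R_scope.

Definition dS (g : R -> R -> R) (S I : R) : R := Derive (fun s => g s I) S.
Definition dI (g : R -> R -> R) (S I : R) : R := Derive (fun i => g S i) I.

Definition C1_2d (g : R -> R -> R) : Prop :=
  forall x y : R,
    ex_derive (fun s => g s y) x /\ ex_derive (fun t => g x t) y /\
    continuity_2d_pt g x y /\ continuity_2d_pt (dS g) x y /\
    continuity_2d_pt (dI g) x y.

Definition C2_2d (g : R -> R -> R) : Prop :=
  C1_2d g /\ C1_2d (dS g) /\ C1_2d (dI g).

Definition incidence_hyp (F f : R -> R -> R) : Prop :=
  C2_2d F /\ C2_2d f /\
  (forall S I, 0 <= S -> 0 <= I -> 0 <= F S I /\ 0 <= f S I) /\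
  (forall S I, 0 <= S -> 0 <= I -> F S I = I * f S I) /\
  (forall I, 0 <= I -> F 0 I = 0) /\
  (forall S, 0 <= S -> F S 0 = 0) /\
  (forall S I, 0 <= S -> 0 <= I -> 0 < dS f S I /\ dI f S I <= 0) /\
  (forall S, 0 < S ->
     exists l, 0 < l /\ filterlim (fun I => F S I / I) (at_right 0) (locally l)).

Definition rhs_S (Lam mu r : R) (F1 F2 : R -> R -> R) (S V1 I1 I2 : R) : R :=
  Lam - F1 S I1 - F2 S I2 - (r + mu) * S.
Definition rhs_V1 (mu r k : R) (S V1 I1 I2 : R) : R :=
  r * S - (mu + k * I2) * V1.
Definition rhs_I1 (mu gamma1 v1 : R) (F1 : R -> R -> R) (S V1 I1 I2 : R) : R :=
  F1 S I1 - (gamma1 + v1 + mu) * I1.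
Definition rhs_I2 (mu k gamma2 v2 : R) (F2 : R -> R -> R) (S V1 I1 I2 : R) : R :=
  F2 S I2 + k * I2 * V1 - (gamma2 + v2 + mu) * I2.

Definition is_equilibrium (Lam mu r k gamma1 gamma2 v1 v2 : R)
    (F1 F2 : R -> R -> R) (S V1 I1 I2 : R) : Prop :=
  0 <= S /\ 0 <= V1 /\ 0 <= I1 /\ 0 <= I2 /\
  rhs_S Lam mu r F1 F2 S V1 I1 I2 = 0 /\
  rhs_V1 mu r k S V1 I1 I2 = 0 /\
  rhs_I1 mu gamma1 v1 F1 S V1 I1 I2 = 0 /\
  rhs_I2 mu k gamma2 v2 F2 S V1 I1 I2 = 0.

Definition is_E2 (Lam mu r k gamma1 gamma2 v1 v2 : R)
    (F1 F2 : R -> R -> R) (S V1 I2 : R) : Prop :=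
  0 < S /\ 0 < V1 /\ 0 < I2 /\
  is_equilibrium Lam mu r k gamma1 gamma2 v1 v2 F1 F2 S V1 0 I2.

Definition R2 (Lam mu r k gamma2 v2 : R) (F2 : R -> R -> R) : R :=
  let lam := r + mu in
  let alpha2 := gamma2 + v2 + mu in
  let S0 := Lam / lam in
  dI F2 S0 0 / alpha2 + k * r * Lam / (alpha2 * mu * lam).

(* At an equilibrium with I1 = 0 and I2 = I > 0, the S- and V1-equations determine S and V1
   as explicit rational functions of I, positive exactly on 0 <= I < Lam/alpha2. What remains
   is the scalar equation g(I) := f2(S(I), I) + k V1(I) - alpha2 = 0 on (0, Lam/alpha2).
   Since dF2/dI2(S, 0) = f2(S, 0), g(0) = alpha2 (R2 - 1), while g(Lam/alpha2) = -alpha2.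
   At a root, f2(S(I), I) > f2(0, I) = 0 forces k V1(I) < alpha2, and for a < b with
   k V1(b) < alpha2 we get g(b) < g(a): V1 decreases, hence so does S, while f2 increases
   in S and does not increase in I. So a root exists iff g(0) > 0 (intermediate value
   theorem), and it is unique. *)

From Stdlib Require Import Reals Lra Psatz.
From Coquelicot Require Import Coquelicot.
Open Scope R_scope.

Lemma continuity_pt_comp_2d (g : R -> R -> R) (u v : R -> R) (x : R) :
  continuity_2d_pt g (u x) (v x) -> continuity_pt u x -> continuity_pt v x ->
  continuity_pt (fun t => g (u t) (v t)) x.
Proof.
  intros Hg Hu Hv.
  apply continuity_pt_locally. intros eps.
  destruct (Hg eps) as [d Hd].
  rewrite continuity_pt_locally in Hu, Hv.
  destruct (Hu d) as [d1 H1]. destruct (Hv d) as [d2 H2].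
  assert (Hm : 0 < Rmin d1 d2) by (apply Rmin_pos; apply cond_pos).
  exists (mkposreal _ Hm). intros y Hy. simpl in Hy.
  apply Hd.
  - apply H1. eapply Rlt_le_trans; [apply Hy | apply Rmin_l].
  - apply H2. eapply Rlt_le_trans; [apply Hy | apply Rmin_r].
Qed.

Lemma Derive_nonpos_nonincr (g : R -> R) (a : R) :
  (forall x, a <= x -> ex_derive g x /\ Derive g x <= 0) ->
  forall x y, a <= x -> x <= y -> g y <= g x.
Proof.
  intros Hg x y Hx Hxy.
  destruct (Req_dec x y) as [<- | Hne]; [lra |].
  destruct (MVT_gen g x y (Derive g)) as [c [Hc Heq]].
  - intros t Ht. apply Derive_correct, Hg.
    rewrite Rmin_left in Ht by lra. lra.
  - intros t Ht. apply continuity_pt_filterlim, (ex_derive_continuous g), Hg.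
    rewrite Rmin_left in Ht by lra. lra.
  - rewrite Rmin_left in Hc by lra.
    assert (Derive g c <= 0) by (apply Hg; lra).
    nra.
Qed.

Lemma Derive_right_quotient (g : R -> R) (x l : R) :
  ex_derive g x ->
  filterlim (fun h => (g (x + h) - g x) / h) (at_right 0) (locally l) ->
  Derive g x = l.
Proof.
  intros Hd Hl.
  apply (filterlim_locally_unique (F := at_right 0) (fun h => (g (x + h) - g x) / h));
    [| exact Hl].
  apply filterlim_locally. intros eps.
  destruct (proj1 (is_derive_Reals _ _ _) (Derive_correct _ _ Hd) eps (cond_pos eps))
    as [d Hdl].
  exists d. intros h Hh Hpos. apply Hdl; [lra |].
  change (Rabs (h - 0) < d) in Hh. rewrite Rminus_0_r in Hh. exact Hh.
Qed.

(* For an equilibrium (S, V1, 0, I) with I > 0, substituting I f2(S, I) = a2 I - k I V1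
   from the I2-equation makes the S- and V1-equations linear in (S, V1); E2_S and E2_V1
   are their solution, and the I2-equation becomes E2_gap f2 = 0. *)
Definition E2_S (Lam mu r k a2 I : R) : R :=
  (Lam - a2 * I) * (mu + k * I) / (mu * (mu + r + k * I)).
Definition E2_V1 (Lam mu r k a2 I : R) : R :=
  r * (Lam - a2 * I) / (mu * (mu + r + k * I)).

Definition E2_gap (f : R -> R -> R) (Lam mu r k a2 I : R) : R :=
  f (E2_S Lam mu r k a2 I) I + k * E2_V1 Lam mu r k a2 I - a2.

Definition E2_root (f : R -> R -> R) (Lam mu r k a2 I : R) : Prop :=
  0 < I /\ a2 * I < Lam /\ E2_gap f Lam mu r k a2 I = 0.

Section E2_reduction.
Variables Lam mu r k a2 : R.
Hypotheses (HLam : 0 < Lam) (Hmu : 0 < mu) (Hr : 0 < r) (Hk : 0 < k) (Ha2 : 0 < a2).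

Local Notation S_ := (E2_S Lam mu r k a2).
Local Notation V_ := (E2_V1 Lam mu r k a2).

Lemma E2_den_pos I : 0 <= I -> 0 < mu * (mu + r + k * I).
Proof. intros HI. apply Rmult_lt_0_compat; nra. Qed.

Lemma E2_V1_S I : 0 <= I -> (mu + k * I) * V_ I = r * S_ I.
Proof. intros HI. unfold E2_V1, E2_S. field. nra. Qed.

Lemma E2_S_balance I : 0 <= I -> (r + mu) * S_ I = Lam - a2 * I + k * I * V_ I.
Proof. intros HI. unfold E2_V1, E2_S. field. nra. Qed.

Lemma E2_coords_unique S V I : 0 <= I ->
  (r + mu) * S = Lam - a2 * I + k * I * V -> (mu + k * I) * V = r * S ->
  S = S_ I /\ V = V_ I.
Proof.
  intros HI HS HV.
  assert (HdS : (r + mu) * (S - S_ I) = k * I * (V - V_ I))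
    by (pose proof (E2_S_balance I HI); lra).
  assert (HdV : (mu + k * I) * (V - V_ I) = r * (S - S_ I))
    by (pose proof (E2_V1_S I HI); lra).
  assert (Hdet : (S - S_ I) * (mu * (mu + r + k * I)) = 0).
  { replace ((S - S_ I) * (mu * (mu + r + k * I)))
      with ((mu + k * I) * ((r + mu) * (S - S_ I)) - k * I * (r * (S - S_ I))) by ring.
    rewrite HdS, <- HdV. ring. }
  assert (HSe : S = S_ I).
  { pose proof (E2_den_pos I HI).
    apply Rmult_integral in Hdet as [? | ?]; lra. }
  rewrite HSe, Rminus_diag, Rmult_0_r in HdV.
  split; [assumption |].
  apply Rmult_integral in HdV as [? | ?]; nra.
Qed.

Lemma E2_S_pos_iff I : 0 <= I -> 0 < S_ I <-> a2 * I < Lam.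
Proof.
  intros HI.
  set (c := (mu + k * I) / (mu * (mu + r + k * I))).
  pose proof (E2_den_pos I HI).
  assert (Hc : 0 < c) by (apply Rdiv_lt_0_compat; nra).
  assert (E : S_ I = (Lam - a2 * I) * c).
  { unfold E2_S, c. field. split; nra. }
  rewrite E. split; intros; nra.
Qed.

Lemma E2_V1_pos I : 0 <= I -> a2 * I < Lam -> 0 < V_ I.
Proof. intros HI HIL. unfold E2_V1. apply Rdiv_lt_0_compat; [nra | now apply E2_den_pos]. Qed.

Lemma E2_V1_decr a b : 0 <= a -> a < b -> V_ b < V_ a.
Proof.
  intros Ha Hab.
  assert (E : V_ a - V_ b = r * (b - a) * (k * Lam + a2 * (mu + r))
                             / (mu * (mu + r + k * a) * (mu + r + k * b))).
  { unfold E2_V1. field. nra. }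
  assert (0 < r * (b - a) * (k * Lam + a2 * (mu + r))
              / (mu * (mu + r + k * a) * (mu + r + k * b))).
  { pose proof (E2_den_pos a Ha).
    apply Rdiv_lt_0_compat; apply Rmult_lt_0_compat; nra. }
  lra.
Qed.

Lemma E2_S_decr a b : 0 <= a -> a < b -> k * V_ b < a2 -> S_ b < S_ a.
Proof.
  intros Ha Hab HVb.
  assert (E : (r + mu) * (S_ a - S_ b) = (b - a) * (a2 - k * V_ b) + a * (k * (V_ a - V_ b))).
  { rewrite Rmult_minus_distr_l, E2_S_balance, E2_S_balance by lra. ring. }
  assert (0 < k * (V_ a - V_ b)) by (pose proof (E2_V1_decr a b Ha Hab); nra).
  nra.
Qed.

Lemma E2_S_0 : S_ 0 = Lam / (r + mu).
Proof. unfold E2_S. field. lra. Qed.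

Lemma E2_V1_0 : k * V_ 0 = k * r * Lam / (mu * (r + mu)).
Proof. unfold E2_V1. field. lra. Qed.

Lemma E2_max : S_ (Lam / a2) = 0 /\ V_ (Lam / a2) = 0.
Proof.
  unfold E2_S, E2_V1. replace (Lam - a2 * (Lam / a2)) with 0 by (field; lra).
  unfold Rdiv. split; ring.
Qed.

Lemma E2_continuous I : 0 <= I -> continuity_pt S_ I /\ continuity_pt V_ I.
Proof.
  intros HI. pose proof (E2_den_pos I HI).
  split; apply continuity_pt_filterlim.
  - apply (ex_derive_continuous S_). unfold E2_S. auto_derive. nra.
  - apply (ex_derive_continuous V_). unfold E2_V1. auto_derive. nra.
Qed.

Variable f : R -> R -> R.
Hypothesis f_incr_S : forall I x y, 0 <= I -> 0 <= x -> x < y -> f x I < f y I.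
Hypothesis f_nonincr_I : forall S a b, 0 <= S -> 0 <= a -> a <= b -> f S b <= f S a.
Hypothesis f_cont : forall S I, continuity_2d_pt f S I.
Hypothesis f_0 : forall I, 0 < I -> f 0 I = 0.

Local Notation gap := (E2_gap f Lam mu r k a2).
Local Notation root := (E2_root f Lam mu r k a2).

Lemma E2_gap_pos I : 0 < I -> a2 * I < Lam -> a2 <= k * V_ I -> 0 < gap I.
Proof.
  intros HI HIL HV. unfold E2_gap.
  assert (0 < S_ I) by (apply E2_S_pos_iff; lra).
  pose proof (f_incr_S I 0 (S_ I) ltac:(lra) ltac:(lra) ltac:(lra)).
  rewrite f_0 in * by lra. lra.
Qed.

Lemma E2_root_V1_lt I : root I -> k * V_ I < a2.
Proof.
  intros [HI [HIL Hg]].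
  destruct (Rlt_or_le (k * V_ I) a2) as [? | HV]; [assumption |].
  pose proof (E2_gap_pos I HI HIL HV). lra.
Qed.

Lemma E2_gap_decr a b : 0 <= a -> a < b -> a2 * b < Lam -> k * V_ b < a2 -> gap b < gap a.
Proof.
  intros Ha Hab HbL HVb. unfold E2_gap.
  pose proof (E2_S_decr a b Ha Hab HVb).
  assert (0 < S_ b) by (apply E2_S_pos_iff; lra).
  pose proof (f_nonincr_I (S_ b) a b ltac:(lra) Ha ltac:(lra)).
  pose proof (f_incr_S a (S_ b) (S_ a) Ha ltac:(lra) ltac:(lra)).
  pose proof (E2_V1_decr a b Ha Hab).
  nra.
Qed.

Lemma E2_gap_continuous I : 0 <= I -> continuity_pt gap I.
Proof.
  intros HI. destruct (E2_continuous I HI) as [HS HV]. unfold E2_gap.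
  apply continuity_pt_minus; [apply continuity_pt_plus | apply continuity_pt_const].
  - apply (continuity_pt_comp_2d f S_ (fun t => t)); auto using continuity_pt_id.
  - apply continuity_pt_scal. exact HV.
  - intros ? ?. reflexivity.
Qed.

Lemma E2_gap_max : gap (Lam / a2) = - a2.
Proof.
  unfold E2_gap. destruct E2_max as [-> ->].
  rewrite f_0 by (apply Rdiv_lt_0_compat; lra). ring.
Qed.

Lemma E2_root_unique I J : root I -> root J -> I = J.
Proof.
  intros HrI HrJ.
  destruct (Rtotal_order I J) as [Hlt | [Heq | Hgt]]; [| exact Heq |].
  - pose proof (E2_gap_decr I J ltac:(destruct HrI; lra) Hlt (proj1 (proj2 HrJ))
                  (E2_root_V1_lt J HrJ)).
    destruct HrI as [_ [_ HgI]]. destruct HrJ as [_ [_ HgJ]]. lra.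
  - pose proof (E2_gap_decr J I ltac:(destruct HrJ; lra) Hgt (proj1 (proj2 HrI))
                  (E2_root_V1_lt I HrI)).
    destruct HrI as [_ [_ HgI]]. destruct HrJ as [_ [_ HgJ]]. lra.
Qed.

Lemma E2_gap0_pos_of_root I : root I -> 0 < gap 0.
Proof.
  intros HrI. pose proof (E2_root_V1_lt I HrI) as HV.
  destruct HrI as [HI [HIL Hg]].
  pose proof (E2_gap_decr 0 I (Rle_refl 0) HI HIL HV). lra.
Qed.

Lemma E2_root_exists : 0 < gap 0 -> exists I, root I.
Proof.
  intros Hg0.
  assert (Hmax : 0 < Lam / a2) by (apply Rdiv_lt_0_compat; lra).
  destruct (Ranalysis5.IVT_interv (fun I => - gap I) 0 (Lam / a2)) as [z [Hz Hgz]].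
  - intros x Hx. apply continuity_pt_opp, E2_gap_continuous. lra.
  - exact Hmax.
  - lra.
  - rewrite E2_gap_max. lra.
  - exists z. assert (Hz0 : gap z = 0) by lra.
    assert (z <> 0) by (intros ->; lra).
    assert (z <> Lam / a2) by (intros ->; rewrite E2_gap_max in Hz0; lra).
    assert (a2 * z < a2 * (Lam / a2)) by (apply Rmult_lt_compat_l; lra).
    replace (a2 * (Lam / a2)) with Lam in * by (field; lra).
    repeat split; lra.
Qed.

Lemma E2_unique_root_iff : (exists I, root I /\ forall J, root J -> J = I) <-> 0 < gap 0.
Proof.
  split.
  - intros [I [HrI _]]. exact (E2_gap0_pos_of_root I HrI).
  - intros Hg0. destruct (E2_root_exists Hg0) as [I HrI].
    exists I. split; [exact HrI |]. intros J HrJ. exact (E2_root_unique J I HrJ HrI).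
Qed.

End E2_reduction.

Section Incidence.
Variables F f : R -> R -> R.
Hypothesis HF : incidence_hyp F f.

Lemma incidence_f_incr_S I x y : 0 <= I -> 0 <= x -> x < y -> f x I < f y I.
Proof.
  destruct HF as [_ [[Hf _] [_ [_ [_ [_ [Hmono _]]]]]]].
  intros HI Hx Hxy.
  apply (incr_function_le (fun s => f s I) 0 p_infty (fun s => dS f s I)); simpl; auto.
  - intros s _ _. apply Derive_correct, Hf.
  - intros s Hs _. apply Hmono; auto.
Qed.

Lemma incidence_f_nonincr_I S a b : 0 <= S -> 0 <= a -> a <= b -> f S b <= f S a.
Proof.
  destruct HF as [_ [[Hf _] [_ [_ [_ [_ [Hmono _]]]]]]].
  intros HS. apply (Derive_nonpos_nonincr (fun i => f S i) 0).
  intros i Hi. split; [apply Hf | apply (Hmono S i HS Hi)].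
Qed.

Lemma incidence_f_continuous S I : continuity_2d_pt f S I.
Proof. destruct HF as [_ [[Hf _] _]]. apply Hf. Qed.

Lemma incidence_f_0 I : 0 < I -> f 0 I = 0.
Proof.
  destruct HF as [_ [_ [_ [HFf [HF0 _]]]]].
  intros HI. pose proof (HF0 I ltac:(lra)) as E.
  rewrite HFf in E by lra. apply Rmult_integral in E as [? | ?]; lra.
Qed.

(* F = I f only for I >= 0, so the derivative at I = 0 is read off the right difference quotient. *)
Lemma incidence_dI_0 S : 0 <= S -> dI F S 0 = f S 0.
Proof.
  destruct HF as [[HFd _] [_ [_ [HFf _]]]].
  intros HS. apply Derive_right_quotient; [apply HFd |].
  apply (filterlim_ext_loc (f S)).
  - exists (mkposreal 1 Rlt_0_1). intros h _ Hh.
    rewrite Rplus_0_l, !HFf by lra. field. lra.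
  - apply (filterlim_filter_le_1 (F := locally 0)); [apply filter_le_within |].
    apply continuity_pt_filterlim, (continuity_pt_comp_2d f (fun _ => S) (fun t => t)).
    + apply incidence_f_continuous.
    + apply continuity_pt_const. intros ? ?. reflexivity.
    + apply continuity_pt_id.
Qed.

End Incidence.

Section Model.
Variables (Lam mu r k gamma1 gamma2 v1 v2 : R) (F1 F2 f2 : R -> R -> R).
Hypotheses (Hmu : 0 < mu) (Hr : 0 < r) (Hk : 0 < k) (Ha2 : 0 < gamma2 + v2 + mu).
Hypothesis HF1 : forall S, 0 <= S -> F1 S 0 = 0.
Hypothesis HF2 : forall S I, 0 <= S -> 0 <= I -> F2 S I = I * f2 S I.

Local Notation a2 := (gamma2 + v2 + mu).
Local Notation E2 := (is_E2 Lam mu r k gamma1 gamma2 v1 v2 F1 F2).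
Local Notation S_ := (E2_S Lam mu r k a2).
Local Notation V_ := (E2_V1 Lam mu r k a2).
Local Notation root := (E2_root f2 Lam mu r k a2).

Lemma is_E2_iff S V I : E2 S V I <-> root I /\ S = S_ I /\ V = V_ I.
Proof.
  unfold is_E2, is_equilibrium, rhs_S, rhs_V1, rhs_I1, rhs_I2, E2_root, E2_gap.
  split.
  - intros [HS [HV [HI [_ [_ [_ [_ [eS [eV [_ eI2]]]]]]]]]].
    rewrite HF1, HF2 in eS by lra. rewrite HF2 in eI2 by lra.
    destruct (E2_coords_unique Lam mu r k a2 Hmu Hr Hk S V I ltac:(lra))
      as [-> ->]; [lra | lra |].
    assert (a2 * I < Lam) by (apply (E2_S_pos_iff Lam mu r k a2 Hmu Hr Hk); lra).
    assert (E : I * (f2 (S_ I) I + k * V_ I - a2) = 0) by lra.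
    apply Rmult_integral in E as [? | ?]; [lra |].
    repeat split; lra.
  - intros [[HI [HIL Hg]] [-> ->]].
    assert (0 < S_ I) by (apply (E2_S_pos_iff Lam mu r k a2 Hmu Hr Hk); lra).
    pose proof (E2_V1_pos Lam mu r k a2 Hmu Hr Hk I ltac:(lra) HIL).
    pose proof (E2_S_balance Lam mu r k a2 Hmu Hr Hk I ltac:(lra)).
    pose proof (E2_V1_S Lam mu r k a2 Hmu Hr Hk I ltac:(lra)).
    rewrite HF1, HF2 by lra.
    assert (I * f2 (S_ I) I = I * (a2 - k * V_ I)) by (f_equal; lra).
    repeat split; lra.
Qed.

Lemma ex_unique_E2_iff :
  (exists S V I, E2 S V I /\ forall S' V' I', E2 S' V' I' -> S' = S /\ V' = V /\ I' = I) <->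
  (exists I, root I /\ forall J, root J -> J = I).
Proof.
  split.
  - intros [S [V [I [HE Huniq]]]].
    pose proof (proj1 (is_E2_iff S V I) HE) as [HrI _].
    exists I. split; [exact HrI |]. intros J HrJ.
    apply (Huniq (S_ J) (V_ J) J), is_E2_iff. auto.
  - intros [I [HrI Huniq]].
    exists (S_ I), (V_ I), I. split; [apply is_E2_iff; auto |].
    intros S' V' I' HE'. apply is_E2_iff in HE' as [HrI' [-> ->]].
    rewrite (Huniq I' HrI'). auto.
Qed.

Lemma E2_gap0_R2 : dI F2 (Lam / (r + mu)) 0 = f2 (Lam / (r + mu)) 0 ->
  E2_gap f2 Lam mu r k a2 0 = a2 * (R2 Lam mu r k gamma2 v2 F2 - 1).
Proof.
  intros HdI. unfold E2_gap, R2. cbv zeta. rewrite HdI.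
  rewrite (E2_S_0 Lam mu r k a2 Hmu Hr), (E2_V1_0 Lam mu r k a2 Hmu Hr).
  field. repeat split; lra.
Qed.

End Model.

Theorem mainTheorem5
  (Lam mu r k gamma1 gamma2 v1 v2 : R) (F1 f1 F2 f2 : R -> R -> R)
  (HLam : 0 < Lam) (Hmu : 0 < mu) (Hr : 0 < r) (Hk : 0 < k)
  (Hg1 : 0 < gamma1) (Hg2 : 0 < gamma2) (Hv1 : 0 <= v1) (Hv2 : 0 <= v2)
  (HF1 : incidence_hyp F1 f1) (HF2 : incidence_hyp F2 f2)
  (Hcond : forall S I2, 0 <= S -> 0 <= I2 -> dS F2 S I2 <= I2) :
  (exists S V1 I2,
     is_E2 Lam mu r k gamma1 gamma2 v1 v2 F1 F2 S V1 I2 /\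
     forall S' V1' I2',
       is_E2 Lam mu r k gamma1 gamma2 v1 v2 F1 F2 S' V1' I2' ->
       S' = S /\ V1' = V1 /\ I2' = I2)
  <-> R2 Lam mu r k gamma2 v2 F2 > 1.
Proof.
  assert (Ha2 : 0 < gamma2 + v2 + mu) by lra.
  assert (HS0 : 0 <= Lam / (r + mu)) by (left; apply Rdiv_lt_0_compat; lra).
  destruct HF1 as [_ [_ [_ [_ [_ [HF1_0 _]]]]]].
  pose proof HF2 as [_ [_ [_ [HF2_f2 _]]]].
  rewrite (ex_unique_E2_iff Lam mu r k gamma1 gamma2 v1 v2 F1 F2 f2 Hmu Hr Hk HF1_0 HF2_f2).
  rewrite (E2_unique_root_iff Lam mu r k _ HLam Hmu Hr Hk Ha2 f2
             (incidence_f_incr_S F2 f2 HF2) (incidence_f_nonincr_I F2 f2 HF2)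
             (incidence_f_continuous F2 f2 HF2) (incidence_f_0 F2 f2 HF2)).
  rewrite (E2_gap0_R2 Lam mu r k gamma2 v2 F2 f2 Hmu Hr Ha2 (incidence_dI_0 F2 f2 HF2 _ HS0)).
  split; intros; nra.
Qed.
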